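(* Let $r$ be real with $0<|r|<1$, and define for $x\in\mathbb{R}$: $f_r(x):=\sum_{n=1}^\infty r^n\varphi^{(n)}(x)$ and $f_{r,N}(x):=\sum_{n=1}^{N-1}r^n\varphi^{(n)}(x)$. Let $E[f_r]:=\int_0^1 f_r(x)\,dx$. Then for every $N=1,2,\dots$ and every $x\in[0,1]$, $$\frac{f_r(x)-f_{r,N}(x)}{\frac12\sum_{n=N}^\infty r^n}=\frac{2(1-r)}{r}\cdot f_r(2^{N-1}x)=\frac{f_r(2^{N-1}x)}{E[f_r]}.$$
   Context: The tent map on $[0,1]$ is $\varphi(x)=2x$ for $x\in[0,1/2]$ and $\varphi(x)=2(1-x)$ for $x\in[1/2,1]$; it is extended to $\mathbb{R}$ by $\varphi(x):=\varphi(x-[x])$ (period 1), and $\varphi^{(n)}$ denotes the $n$-fold iterate of $\varphi$, so that $\varphi^{(n)}(x)=\varphi(2^{n-1}x)$. *)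

From Stdlib Require Import Reals.
From Coquelicot Require Import Coquelicot.
Open Scope R_scope.

(* Tent map on [0,1], extended with period 1 via the fractional part
   (frac_part x = x - Int_part x, Int_part = floor). *)
Definition tent01 (y : R) : R := if Rle_dec y (1/2) then 2 * y else 2 * (1 - y).
Definition phi (x : R) : R := tent01 (frac_part x).

Fixpoint phi_iter (n : nat) (x : R) : R :=
  match n with
  | O => x
  | S k => phi (phi_iter k x)
  end.

Definition f_r (r x : R) : R := Series (fun k => r ^ (S k) * phi_iter (S k) x).

(* f_{r,N}(x) = sum_{n=1}^{N-1} r^n phi^(n)(x)  (empty sum = 0 when N = 1) *)
Definition f_rN (r : R) (N : nat) (x : R) : R :=
  sum_n_m (fun n => r ^ n * phi_iter n x) 1 (N - 1).

Definition E_f (r : R) : R := RInt (f_r r) 0 1.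

Definition tail_geom (r : R) (N : nat) : R := Series (fun k => r ^ (N + k)).

From Stdlib Require Import Reals Lra Lia.
From Coquelicot Require Import Coquelicot.
Open Scope R_scope.

(* Since phi (phi y) = phi (2 y), the iterates satisfy phi^(n+j)(x) = phi^(n)(2^j x),
   so the tail sum_{n>=N} r^n phi^(n)(x) is r^(N-1) f_r(2^(N-1) x), while
   sum_{n>=N} r^n = r^N / (1 - r).  The tent map preserves Lebesgue measure on
   [0,1], so every phi^(n) has mean 1/2; integrating the uniformly convergent
   series termwise gives E[f_r] = r / (2 (1 - r)).  Neither identity needs
   x in [0,1]. *)

Lemma frac_part_id z : 0 <= z < 1 -> frac_part z = z.
Proof.
  intros Hz. symmetry. apply (Int_part_frac_part_spec z 0 z Hz). simpl; ring.
Qed.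

Lemma frac_part_shift (k : Z) z : frac_part (IZR k + z) = frac_part z.
Proof.
  pose proof (base_fp z) as Hz. pose proof (Rplus_Int_part_frac_part z) as Ez.
  symmetry. apply (Int_part_frac_part_spec _ (k + Int_part z)); [lra|].
  rewrite plus_IZR. lra.
Qed.

Lemma phi_shift (k : Z) z : phi (IZR k + z) = phi z.
Proof. unfold phi. now rewrite frac_part_shift. Qed.

Lemma phi_eq_tent01 x : 0 <= x < 1 -> phi x = tent01 x.
Proof. intros Hx. unfold phi. now rewrite frac_part_id. Qed.

Lemma tent01_range y : 0 <= y <= 1 -> 0 <= tent01 y <= 1.
Proof. unfold tent01; destruct (Rle_dec y (1/2)); lra. Qed.

Lemma tent01_sym u : 0 <= u <= 1 -> tent01 (1 - u) = tent01 u.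
Proof. unfold tent01; destruct (Rle_dec (1 - u) (1/2)), (Rle_dec u (1/2)); lra. Qed.

Lemma phi_range x : 0 <= phi x <= 1.
Proof. apply tent01_range. pose proof (base_fp x). lra. Qed.

Lemma phi_iterS n x : phi_iter (S n) x = phi_iter n (phi x).
Proof. induction n as [|n IH]; simpl in *; congruence. Qed.

(* With f the fractional part of y, phi (2 y) = phi (2 f); when f > 1/2,
   phi y = 2 (1 - f) and phi (2 f) = tent01 (1 - 2 (1 - f)), so the symmetry
   u |-> 1 - u of the tent closes the gap. *)
Lemma phi_phi y : phi (phi y) = phi (2 * y).
Proof.
  pose proof (base_fp y) as Hf. pose proof (Rplus_Int_part_frac_part y) as Ey.
  set (f := frac_part y) in *.
  replace (2 * y) with (IZR (2 * Int_part y) + 2 * f) by (rewrite mult_IZR; lra).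
  rewrite phi_shift. change (phi y) with (tent01 f). unfold tent01 at 1.
  destruct (Rle_dec f (1/2)) as [Hf2|Hf2]; [reflexivity|].
  replace (2 * f) with (IZR 1 + (1 - 2 * (1 - f))) by (simpl; ring).
  rewrite phi_shift, !phi_eq_tent01, tent01_sym by lra. reflexivity.
Qed.

Lemma phi_iterS_pow2 n j y : phi_iter (S n) (2 ^ j * y) = phi_iter (S n + j) y.
Proof.
  revert n y; induction j as [|j IH]; intros n y.
  - now rewrite pow_O, Rmult_1_l, Nat.add_0_r.
  - replace (2 ^ S j * y) with (2 ^ j * (2 * y)) by (simpl; ring).
    rewrite IH, Nat.add_succ_r, Nat.add_succ_l, phi_iterS, <- phi_phi.
    now rewrite <- !phi_iterS.
Qed.

Section WeierstrassMTest.

Variables (T : Type) (u : nat -> T -> R) (M : nat -> R).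
Hypothesis u_le_M : forall k t, Rabs (u k t) <= M k.
Hypothesis ex_series_M : ex_series M.

Lemma ex_series_Mtest t : ex_series (fun k => u k t).
Proof.
  apply (@ex_series_le R_AbsRing R_CompleteNormedModule _ M);
    [intros k; apply u_le_M | exact ex_series_M].
Qed.

Lemma Series_Mtest_remainder t n :
  Rabs (Series (fun k => u k t) - sum_n (fun k => u k t) n)
    <= Series M - sum_n M n.
Proof.
  assert (Hshift : forall a : nat -> R, ex_series a ->
            Series a - sum_n a n = Series (fun k => a (S n + k)%nat)).
  { intros a Ha. rewrite (Series_incr_n a (S n)), sum_n_Reals by (lia || exact Ha).
    simpl pred. ring. }
  rewrite !Hshift by (exact ex_series_M || apply ex_series_Mtest).
  assert (Hrem : ex_series (fun k => M (S n + k)%nat))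
    by now apply ex_series_incr_n.
  assert (Habs : ex_series (fun k => Rabs (u (S n + k)%nat t))).
  { apply (@ex_series_le R_AbsRing R_CompleteNormedModule _ (fun k => M (S n + k)%nat));
      [|exact Hrem].
    intros k. apply (Rle_trans _ _ _ (Req_le _ _ (Rabs_Rabsolu _))). apply u_le_M. }
  eapply Rle_trans; [now apply Series_Rabs|].
  apply Series_le; [|exact Hrem]. intros k. split; [apply Rabs_pos | apply u_le_M].
Qed.

Lemma uniform_cvg_Mtest :
  filterlim (fun n t => sum_n (fun k => u k t) n) eventually
    (@locally (fct_UniformSpace T R_UniformSpace) (fun t => Series (fun k => u k t))).
Proof.
  apply (proj2 (@filterlim_locally _ (fct_UniformSpace T R_UniformSpace) _ _ _ _)).
  intros eps.
  pose proof (proj1 (filterlim_locally _ _) (Series_correct _ ex_series_M) eps) as HM.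
  eapply filter_imp; [|exact HM]. intros n Hn t.
  change (Rabs (sum_n (fun k => u k t) n - Series (fun k => u k t)) < eps).
  change (Rabs (sum_n M n - Series M) < eps) in Hn.
  rewrite Rabs_minus_sym in Hn |- *.
  eapply Rle_lt_trans; [apply Series_Mtest_remainder|].
  eapply Rle_lt_trans; [apply Rle_abs | exact Hn].
Qed.

End WeierstrassMTest.

Lemma is_RInt_sum_n {V : NormedModule R_AbsRing} (f : nat -> R -> V) (I : nat -> V) a b n :
  (forall k, is_RInt (f k) a b (I k)) ->
  is_RInt (fun t => sum_n (fun k => f k t) n) a b (sum_n I n).
Proof.
  intros HI. induction n as [|n IH].
  - rewrite sum_O. apply (is_RInt_ext (f O)); [intros t _; now rewrite sum_O | apply HI].
  - rewrite sum_Sn.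
    apply (is_RInt_ext (fun t => plus (sum_n (fun k => f k t) n) (f (S n) t))).
    + intros t _. now rewrite sum_Sn.
    + now apply is_RInt_plus.
Qed.

Lemma is_RInt_Series_Mtest (u : nat -> R -> R) (M : nat -> R) (I : nat -> R) a b :
  (forall k t, Rabs (u k t) <= M k) -> ex_series M ->
  (forall k, is_RInt (u k) a b (I k)) ->
  is_RInt (fun t => Series (fun k => u k t)) a b (Series I).
Proof.
  intros HuM HM HI.
  destruct (filterlim_RInt (fun n t => sum_n (fun k => u k t) n) a b eventually
              eventually_filter _ (sum_n I) (fun n => is_RInt_sum_n u I a b n HI)
              (uniform_cvg_Mtest R u M HuM HM)) as [J [HJ HintJ]].
  now rewrite (is_series_unique I J HJ).
Qed.

Lemma is_RInt_comp_affine (g : R -> R) (c d a b I : R) : c <> 0 ->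
  is_RInt g (c * a + d) (c * b + d) I -> is_RInt (fun y => g (c * y + d)) a b (I / c).
Proof.
  intros Hc HI. apply is_RInt_comp_lin, (is_RInt_scal _ _ _ (/ c)) in HI.
  replace (I / c) with (scal (/ c) I) by (unfold scal; simpl; unfold mult; simpl; now field).
  eapply is_RInt_ext; [|exact HI]. intros y _.
  unfold scal; simpl; unfold mult; simpl. now field.
Qed.

(* The tent map is 2-to-1 with slopes +-2, so it preserves Lebesgue measure on [0,1]. *)
Lemma is_RInt_comp_tent01 (g : R -> R) I :
  is_RInt g 0 1 I -> is_RInt (fun x => g (tent01 x)) 0 1 I.
Proof.
  intros HI.
  assert (Hleft : is_RInt (fun y => g (2 * y + 0)) 0 (1/2) (I / 2)).
  { apply is_RInt_comp_affine; [lra|].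
    replace (2 * 0 + 0) with 0 by ring. now replace (2 * (1/2) + 0) with 1 by field. }
  assert (Hright : is_RInt (fun y => g (-2 * y + 2)) (1/2) 1 (- I / -2)).
  { apply is_RInt_comp_affine; [lra|].
    replace (-2 * (1/2) + 2) with 1 by field. replace (-2 * 1 + 2) with 0 by ring.
    exact (is_RInt_swap g 1 0 I HI). }
  replace I with (plus (I / 2) (- I / -2)) by (unfold plus; simpl; field).
  apply (@is_RInt_Chasles R_NormedModule _ 0 (1/2) 1).
  - eapply is_RInt_ext; [|exact Hleft]. intros x Hx.
    rewrite Rmin_left, Rmax_right in Hx by lra.
    unfold tent01. destruct (Rle_dec x (1/2)); [f_equal; ring | lra].
  - eapply is_RInt_ext; [|exact Hright]. intros x Hx.
    rewrite Rmin_left, Rmax_right in Hx by lra.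
    unfold tent01. destruct (Rle_dec x (1/2)); [lra | f_equal; ring].
Qed.

Lemma is_RInt_id01 : is_RInt (fun x => x) 0 1 (1/2).
Proof.
  replace (1/2) with (minus ((fun x => x * x / 2) 1) ((fun x => x * x / 2) 0))
    by (unfold minus, plus, opp; simpl; field).
  apply (is_RInt_derive (fun x => x * x / 2)).
  - intros x _. auto_derive; [easy | field].
  - intros x _. apply continuous_id.
Qed.

Lemma is_RInt_phi_iter n : is_RInt (phi_iter n) 0 1 (1/2).
Proof.
  induction n as [|n IH]; [exact is_RInt_id01|].
  apply is_RInt_comp_tent01 in IH. eapply is_RInt_ext; [|exact IH].
  intros x Hx. rewrite Rmin_left, Rmax_right in Hx by lra.
  now rewrite phi_iterS, phi_eq_tent01 by lra.
Qed.

Lemma is_series_geom_shift q N :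
  Rabs q < 1 -> is_series (fun k => q ^ (N + k)) (q ^ N / (1 - q)).
Proof.
  intros Hq. apply (is_series_ext (fun k => scal (q ^ N) (q ^ k))).
  - intros k. now rewrite pow_add.
  - apply (@is_series_scal_l R_AbsRing R_NormedModule), is_series_geom, Hq.
Qed.

Lemma tail_geom_val r N : Rabs r < 1 -> tail_geom r N = r ^ N / (1 - r).
Proof. intros Hr. now apply is_series_unique, is_series_geom_shift. Qed.

Lemma Series_sub_sum_n_m (a : nat -> R) p : ex_series (fun k => a (S k)) ->
  Series (fun k => a (S k)) - sum_n_m a 1 p = Series (fun k => a (S (p + k))).
Proof.
  intros Ha. induction p as [|p IH].
  - rewrite sum_n_m_zero by lia. unfold zero; simpl. now rewrite Rminus_0_r.
  - rewrite sum_n_Sm by lia. change (plus ?u ?v) with (u + v).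
    assert (Hp : ex_series (fun k => a (S (p + k))))
      by exact (proj1 (ex_series_incr_n (fun k => a (S k)) p) Ha).
    rewrite (Series_incr_1 _ Hp), Nat.add_0_r in IH.
    rewrite (Series_ext (fun k => a (S (S p + k))) (fun k => a (S (p + S k))))
      by (intros k; f_equal; lia).
    lra.
Qed.

Section TentSeries.

Variable r : R.
Hypothesis r_lt1 : Rabs r < 1.

Lemma term_le_geom k x : Rabs (r ^ S k * phi_iter (S k) x) <= Rabs r ^ S k.
Proof.
  destruct (phi_range (phi_iter k x)) as [H0 H1].
  change (phi (phi_iter k x)) with (phi_iter (S k) x) in H0, H1.
  rewrite Rabs_mult, <- RPow_abs, (Rabs_right (phi_iter _ _)) by lra.
  rewrite <- (Rmult_1_r (Rabs r ^ S k)) at 2.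
  apply Rmult_le_compat_l; [apply pow_le, Rabs_pos | exact H1].
Qed.

Lemma ex_series_geom_S : ex_series (fun k => Rabs r ^ S k).
Proof.
  eexists. apply (is_series_geom_shift _ 1). now rewrite Rabs_Rabsolu.
Qed.

Lemma f_r_sub_f_rN x p : f_r r x - f_rN r (S p) x = r ^ p * f_r r (2 ^ p * x).
Proof.
  unfold f_r, f_rN. replace (S p - 1)%nat with p by lia.
  rewrite (Series_sub_sum_n_m (fun n => r ^ n * phi_iter n x)).
  - rewrite <- Series_scal_l. apply Series_ext. intros k.
    rewrite phi_iterS_pow2.
    replace (S k + p)%nat with (p + S k)%nat by lia.
    replace (S (p + k)) with (p + S k)%nat by lia.
    rewrite pow_add. ring.
  - apply (ex_series_Mtest R (fun k x => r ^ S k * phi_iter (S k) x) _ term_le_geom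
             ex_series_geom_S).
Qed.

Lemma E_f_val : E_f r = r / (2 * (1 - r)).
Proof.
  assert (Hr : r < 1) by (pose proof (Rle_abs r); lra).
  apply is_RInt_unique.
  replace (r / (2 * (1 - r))) with (Series (fun k => r ^ S k * (1/2))).
  - apply (is_RInt_Series_Mtest _ _ _ _ _ term_le_geom ex_series_geom_S).
    intros k. apply (@is_RInt_scal R_NormedModule), is_RInt_phi_iter.
  - rewrite Series_scal_r.
    rewrite (is_series_unique (fun k => r ^ S k) _ (is_series_geom_shift r 1 r_lt1)).
    field. lra.
Qed.

End TentSeries.

Theorem lemma3p1 (r : R) (hr0 : 0 < Rabs r) (hr1 : Rabs r < 1)
  (N : nat) (hN : (1 <= N)%nat) (x : R) (hx : 0 <= x <= 1) :
  (f_r r x - f_rN r N x) / (1/2 * tail_geom r N)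
    = 2 * (1 - r) / r * f_r r (2 ^ (N - 1) * x)
  /\ 2 * (1 - r) / r * f_r r (2 ^ (N - 1) * x)
    = f_r r (2 ^ (N - 1) * x) / E_f r.
Proof.
  destruct N as [|p]; [lia|]. replace (S p - 1)%nat with p by lia.
  assert (Hr0 : r <> 0) by (intros E; rewrite E, Rabs_R0 in hr0; lra).
  assert (Hr1 : 1 - r <> 0) by (pose proof (Rle_abs r); lra).
  assert (Hrp : r ^ p <> 0) by now apply pow_nonzero.
  rewrite f_r_sub_f_rN, tail_geom_val, E_f_val by exact hr1.
  split; simpl; field; auto.
Qed.
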